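(* Let $p\ge2$, $n\ge p$, and $\boldsymbol d\in\mathcal S_p$ with $D=\mathrm{diag}(\boldsymbol d)$. Then for each $i=1,\dots,p$, $$0<\frac{\partial}{\partial d_i}\,{}_0F_1\!\left(\tfrac n2,\tfrac{D^2}{4}\right)<{}_0F_1\!\left(\tfrac n2,\tfrac{D^2}{4}\right).$$
   Context: $\mathcal S_p=\{(d_1,\dots,d_p):0<d_p<\cdots<d_1<\infty\}$. $\mathcal V_{n,p}=\{X\in\mathbb R^{n\times p}:X^TX=I_p\}$ with normalized Haar probability measure $[dX]$. For diagonal $D$ with diagonal $\boldsymbol d$, ${}_0F_1\!\left(\tfrac n2,\tfrac{D^2}{4}\right)=\int_{\mathcal V_{n,p}}\exp\big(\sum_{j=1}^p d_jX_{jj}\big)[dX]$. *)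

From HB Require Import structures.
From mathcomp Require Import all_boot all_order all_algebra.
From mathcomp Require Import all_classical all_reals all_analysis.
Set Implicit Arguments. Unset Strict Implicit. Unset Printing Implicit Defensive.
Import Order.TTheory GRing.Theory Num.Theory.
Import numFieldNormedType.Exports.
Local Open Scope classical_set_scope.
Local Open Scope ring_scope.

Definition mxBorel (R : realType) (n p : nat) :=
  g_sigma_algebraType (@open 'M[R]_(n, p)).

Definition stiefel (R : realType) (n p : nat) : set (mxBorel R n p) :=
  [set X : 'M[R]_(n, p) | X^T *m X = 1%:M].

Definition orthogonal_mx (R : realType) (n : nat) (Q : 'M[R]_n) : Prop :=
  Q^T *m Q = 1%:M.

Definition is_haar_stiefel (R : realType) (n p : nat)
    (mu : probability (mxBorel R n p) R) : Prop :=
  mu (@stiefel R n p) = 1%E /\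
  forall (Q : 'M[R]_n), orthogonal_mx Q ->
    forall A : set (mxBorel R n p), measurable A ->
      mu ((fun X : 'M[R]_(n, p) => Q *m X) @^-1` A) = mu A.

Definition diag_pairing (R : realType) (n p : nat) (d : 'rV[R]_p)
    (X : 'M[R]_(n, p)) : R :=
  \sum_(i < n) \sum_(j < p | (i : nat) == (j : nat)) d 0 j * X i j.

(* 0F1(n/2, D^2/4) = \int_{V_{n,p}} exp(sum_j d_j X_jj) [dX], as a function of d *)
Definition hyp0F1 (R : realType) (n p : nat)
    (mu : probability (mxBorel R n p) R) (d : 'rV[R]_p) : R :=
  Rintegral mu setT (fun X : mxBorel R n p => expR (diag_pairing d X)).

(* d in S_p : 0 < d_p < ... < d_1 (0-indexed: d_0 > d_1 > ... > d_{p-1} > 0) *)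
Definition in_Sp (R : realType) (p : nat) (d : 'rV[R]_p) : Prop :=
  (forall j : 'I_p, 0 < d 0 j) /\
  (forall j k : 'I_p, (j < k)%N -> d 0 k < d 0 j).

(* i-th standard basis row vector; partial derivative w.r.t. d_i is the
   directional derivative along it *)
Definition e_ (R : realType) (p : nat) (i : 'I_p) : 'rV[R]_p := delta_mx 0 i.

(* Differentiating under the integral sign (the integrand is bounded on the
   compact Stiefel manifold) gives d/dd_i 0F1 = \int X_ii e^<d,X> [dX].
   The reflection of the i-th coordinate of R^n preserves the Haar measure,
   flips the sign of X_ii and lowers <d,X> by 2 d_i X_ii, so the derivative is
   half the integral of X_ii (e^<d,X> - e^(<d,X> - 2 d_i X_ii)), whose
   integrand is nonnegative because d_i > 0 and vanishes only where X_ii = 0.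
   Permuting coordinates shows that X_ii = 0 almost everywhere would force a
   whole column of X to vanish, contradicting X^T X = I, so the derivative is
   positive.  Since X_ii <= 1 it is at most 0F1, with equality only if
   X_ii = 1 almost everywhere, which the same reflection rules out. *)

From HB Require Import structures.
From mathcomp Require Import all_boot all_order all_algebra.
From mathcomp Require Import all_classical all_reals all_analysis.
From mathcomp Require Import measurable_realfun ring lra.
From mathcomp Require Import fingroup perm.
Import Order.TTheory GRing.Theory Num.Theory.
Import numFieldNormedType.Exports.
Local Open Scope classical_set_scope.
Local Open Scope ring_scope.

Section measure_facts.
Context {R : realType} {d : measure_display} {T : measurableType d}.
Variable mu : {measure set T -> \bar R}.

Lemma integrableB_EFin (S : set T) (f g : T -> R) : measurable S ->
  mu.-integrable S (EFin \o f) -> mu.-integrable S (EFin \o g) ->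
  mu.-integrable S (EFin \o (f \- g)).
Proof. by move=> mS if_ ig; apply: (eq_integrable mS _ _ _ (integrableB mS if_ ig)). Qed.

Lemma integrableZl_EFin (S : set T) (f : T -> R) (c : R) : measurable S ->
  mu.-integrable S (EFin \o f) -> mu.-integrable S (EFin \o (fun x => c * f x)).
Proof. by move=> mS if_; apply: (eq_integrable mS _ _ _ (integrableZl mS c if_)). Qed.

Lemma ae_exists (S : set T) (Q : T -> Prop) : measurable S -> mu S != 0%E ->
  (\forall x \ae mu, S x -> Q x) -> exists2 x, S x & Q x.
Proof.
move=> mS /negP muS [N [mN N0 SQN]]; apply: contrapT => noSQ; apply: muS.
rewrite -measure_le0 -N0; apply: le_measure; rewrite ?mem_set // => x Sx.
by apply: SQN => /(_ Sx) Qx; apply: noSQ; exists x.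
Qed.

Lemma Rintegral_eq0_ae (S : set T) (k : T -> R) : measurable S ->
  mu.-integrable S (EFin \o k) -> (forall x, S x -> 0 <= k x) ->
  \int[mu]_(x in S) k x = 0 -> \forall x \ae mu, S x -> k x = 0.
Proof.
move=> mS ik k0 I0.
suff : ae_eq mu S (EFin \o k) (cst 0%E) by apply: filterS => x + Sx => /(_ Sx) [].
apply/(ae_eq_integral_abs mu mS (measurable_int mu ik)).
rewrite (eq_integral (EFin \o k)) => [|x /set_mem Sx]; last by rewrite /= ger0_norm ?k0.
by rewrite -(fineK (integrable_fin_num mS ik)) -/(Rintegral _ _ _) I0.
Qed.

Lemma lt_Rintegral (S : set T) (f g : T -> R) : measurable S ->
  mu.-integrable S (EFin \o f) -> mu.-integrable S (EFin \o g) ->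
  (forall x, S x -> f x <= g x) -> ~ (\forall x \ae mu, S x -> f x = g x) ->
  \int[mu]_(x in S) f x < \int[mu]_(x in S) g x.
Proof.
move=> mS if_ ig fg nfg; rewrite lt_def (le_Rintegral mS if_ ig fg) andbT.
apply/eqP => /eqP; rewrite -subr_eq0 -RintegralB // => /eqP I0; apply: nfg.
have igf := integrableB_EFin _ _ _ mS ig if_.
have gf0 x : S x -> 0 <= g x - f x by move=> Sx; rewrite subr_ge0 fg.
apply: filterS (Rintegral_eq0_ae _ _ mS igf gf0 I0) => x gf Sx.
by apply/eqP; rewrite eq_sym -subr_eq0; apply/eqP; exact: gf.
Qed.

End measure_facts.

Section measure_preserving.
Context {R : realType} {d : measure_display} {T : measurableType d}.
Variables (mu : {measure set T -> \bar R}) (phi : T -> T).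
Hypotheses (mphi : measurable_fun setT phi)
  (phiP : forall A, measurable A -> mu (phi @^-1` A) = mu A).

Lemma Rintegral_comp_preserving (S : set T) (g : T -> R) : measurable S ->
  phi @^-1` S = S -> measurable_fun setT g ->
  mu.-integrable S (EFin \o (g \o phi)) ->
  \int[mu]_(x in S) g (phi x) = \int[mu]_(x in S) g x.
Proof.
move=> mS phiS mg igphi; rewrite /Rintegral; congr fine.
have mgE : measurable_fun setT (EFin \o g) by exact/measurable_EFinP.
rewrite [RHS](eq_measure_integral (pushforward mu phi)); last first.
  by move=> A mA _; rewrite -phiP.
have igphi' : mu.-integrable (phi @^-1` S) ((EFin \o g) \o phi) by rewrite phiS.
by rewrite (integral_pushforward mphi mgE igphi' mS) phiS.
Qed.

Lemma ae_comp_preserving (Q : T -> Prop) :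
  (\forall x \ae mu, Q x) -> \forall x \ae mu, Q (phi x).
Proof.
move=> [N [mN N0 QN]]; exists (phi @^-1` N); split => [||x /QN //].
- by rewrite -[_ @^-1` _]setTI; exact: mphi.
- by rewrite phiP.
Qed.

End measure_preserving.

Section probability_facts.
Context {R : realType} {d : measure_display} {T : measurableType d}.
Variable mu : probability T R.

Lemma bounded_integrable (S : set T) (f : T -> R) (M : R) : measurable S ->
  measurable_fun setT f -> (forall x, S x -> `|f x| <= M) ->
  mu.-integrable S (EFin \o f).
Proof.
move=> mS mf fM; apply: measurable_bounded_integrable => //.
- by apply: le_lt_trans (probability_le1 _ mS) _; rewrite ltry.
- exact: measurable_funTS.
- exists M; split; first exact: num_real.
  by move=> M' MM' x Sx; apply: le_trans (fM x Sx) (ltW MM').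
Qed.

Lemma normr_Rintegral_le (S : set T) (f : T -> R) (M : R) : measurable S ->
  measurable_fun setT f -> 0 <= M -> (forall x, S x -> `|f x| <= M) ->
  `|\int[mu]_(x in S) f x| <= M.
Proof.
move=> mS mf M0 fM.
have icst : mu.-integrable S (EFin \o cst M).
  by apply: (bounded_integrable _ _ M mS (measurable_cst _)) => x _; rewrite ger0_norm.
apply: le_trans (le_normr_Rintegral mS (bounded_integrable _ _ _ mS mf fM)) _.
apply: le_trans (le_Rintegral mS _ icst fM) _.
  apply: (bounded_integrable _ _ M mS) => [|x Sx]; last by rewrite normr_id fM.
  exact: measurableT_comp mf.
rewrite Rintegral_cst // ler_piMr // -lee_fin fineK ?probability_le1 //.
by rewrite fin_num_measure.
Qed.

Lemma Rintegral_full_measure (S : set T) (f : T -> R) : measurable S ->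
  mu S = 1%E -> measurable_fun setT f ->
  \int[mu]_(x in setT) f x = \int[mu]_(x in S) f x.
Proof.
move=> mS muS mf; rewrite /Rintegral; congr fine.
have muCS : mu (~` S) = 0%E by rewrite probability_setC // muS subee.
have mfE : measurable_fun setT (EFin \o f) by exact/measurable_EFinP.
have TCS : setT `\` ~` S = S by rewrite setDE setCK setTI.
rewrite integralE [in RHS]integralE -[in RHS]TCS.
have mCS := measurableC mS.
by congr (_ - _)%E; apply: ge0_negligible_integral => //;
  [exact: measurable_funepos|exact: measurable_funeneg].
Qed.

End probability_facts.

Lemma expR_taylor1_le {R : realType} (t : R) :
  `|expR t - 1 - t| <= t ^+ 2 * expR `|t|.
Proof.
have e0 := expR_gt0 t; have t1 := expR_ge1Dx t; have t2 := expR_ge1Dx (- t).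
have eN : expR (- t) * expR t = 1 by rewrite -expRD addNr expR0.
have upper : expR t - 1 - t <= t * (expR t - 1) by nra.
rewrite ger0_norm; last lra.
apply: le_trans upper _.
have et1 : expR t * (1 - t) <= 1.
  by have := ler_wpM2l (ltW e0) t2; rewrite [X in _ <= X]mulrC eN; lra.
have [t0|t0] := leP 0 t; first by rewrite ger0_norm //; nra.
have : 1 <= expR (- t) by rewrite -expR0 ler_expR; lra.
by rewrite ltr0_norm //; nra.
Qed.

Lemma mul_expR_gap_gt0 {R : realType} (a c t : R) : 0 < c -> t != 0 ->
  0 < t * (expR a - expR (a - c * t)).
Proof.
move=> c0; case: (ltrgtP t 0) => [t0|t0|->]; rewrite ?eqxx // => _.
- have : expR a < expR (a - c * t) by rewrite ltr_expR; nra.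
  by nra.
- have : expR (a - c * t) < expR a by rewrite ltr_expR; nra.
  by nra.
Qed.

Section exp_tilt.
Context {R : realType} {d : measure_display} {T : measurableType d}.
Variables (mu : probability T R) (S : set T) (y P : T -> R) (A B : R).
Hypotheses (mS : measurable S) (my : measurable_fun setT y)
  (mP : measurable_fun setT P)
  (yA : forall x, S x -> `|y x| <= A) (PB : forall x, S x -> P x <= B).

Let mexpP : measurable_fun setT (fun x => expR (P x)).
Proof. by apply: measurableT_comp; [exact: measurable_expR|]. Qed.

Let mmoment : measurable_fun setT (fun x => y x * expR (P x)).
Proof. exact: measurable_funM my mexpP. Qed.

Let expP_le x : S x -> expR (P x) <= expR B.
Proof. by move=> Sx; rewrite ler_expR PB. Qed.

Let integrable_expP : mu.-integrable S (EFin \o (fun x => expR (P x))).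
Proof.
apply: (bounded_integrable mu _ _ (expR B) mS mexpP) => x Sx.
by rewrite (gtr0_norm (expR_gt0 _)) expP_le.
Qed.

Let moment_le x : S x -> `|y x * expR (P x)| <= A * expR B.
Proof.
move=> Sx; rewrite normrM (gtr0_norm (expR_gt0 _)).
by apply: ler_pM; rewrite ?expR_ge0 ?yA ?expP_le.
Qed.

Let integrable_moment : mu.-integrable S (EFin \o (fun x => y x * expR (P x))).
Proof. exact: bounded_integrable mu _ _ _ mS mmoment moment_le. Qed.

Let integrable_tilt h : mu.-integrable S (EFin \o (fun x => expR (h * y x + P x))).
Proof.
apply: (bounded_integrable mu _ _ (expR (`|h| * A + B)) mS).
  apply: measurableT_comp; first exact: measurable_expR.
  exact: measurable_funD (measurable_funM (measurable_cst _) my) mP.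
move=> x Sx; rewrite (gtr0_norm (expR_gt0 _)) ler_expR lerD ?PB //.
by apply: le_trans (ler_norm _) _; rewrite normrM ler_wpM2l ?yA.
Qed.

Lemma exp_tilt_quotient_cvg :
  h^-1 * (\int[mu]_(x in S) expR (h * y x + P x) - \int[mu]_(x in S) expR (P x))
    @[h --> 0^'] --> \int[mu]_(x in S) (y x * expR (P x)).
Proof.
pose C := A ^+ 2 * expR (A + B).
have C0 : 0 <= C by rewrite mulr_ge0 ?sqr_ge0 ?expR_ge0.
pose rem h x := expR (h * y x + P x) - expR (P x) - h * (y x * expR (P x)).
have rem_le h x : `|h| <= 1 -> S x -> `|rem h x| <= h ^+ 2 * C.
  move=> h1 Sx; have /andP[yAl yAr] : - A <= y x <= A by rewrite -ler_norml yA.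
  have -> : rem h x = expR (P x) * (expR (h * y x) - 1 - h * y x).
    by rewrite /rem expRD; ring.
  rewrite normrM (gtr0_norm (expR_gt0 _)).
  apply: le_trans (ler_wpM2l (expR_ge0 _) (expR_taylor1_le _)) _.
  have hy2 : (h * y x) ^+ 2 <= h ^+ 2 * A ^+ 2 by rewrite exprMn ler_wpM2l ?sqr_ge0 //; nra.
  have ehy : expR `|h * y x| <= expR A.
    by rewrite ler_expR normrM; have := normr_ge0 h; have := yA x Sx; nra.
  have -> : h ^+ 2 * C = expR B * (h ^+ 2 * A ^+ 2 * expR A) by rewrite /C expRD; ring.
  apply: ler_pM; [exact: expR_ge0|by rewrite mulr_ge0 ?sqr_ge0 ?expR_ge0|exact: expP_le|].
  by apply: ler_pM; rewrite ?sqr_ge0 ?expR_ge0.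
have key h : h != 0 -> `|h| <= 1 ->
    `|h^-1 * (\int[mu]_(x in S) expR (h * y x + P x) - \int[mu]_(x in S) expR (P x))
      - \int[mu]_(x in S) (y x * expR (P x))| <= `|h| * C.
  move=> h0 h1.
  have mrem : measurable_fun setT (rem h).
    apply: measurable_funB; last exact: measurable_funM (measurable_cst _) mmoment.
    apply: measurable_funB mexpP; apply: measurableT_comp; first exact: measurable_expR.
    exact: measurable_funD (measurable_funM (measurable_cst _) my) mP.
  have -> : h^-1 * (\int[mu]_(x in S) expR (h * y x + P x) - \int[mu]_(x in S) expR (P x))
      - \int[mu]_(x in S) (y x * expR (P x)) = h^-1 * \int[mu]_(x in S) rem h x.
    rewrite /rem RintegralB // ?RintegralB ?RintegralZl //; first by field.
      exact: integrableB_EFin.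
    exact: integrableZl_EFin.
  rewrite normrM normfV ler_pdivrMl ?normr_gt0 // mulrA -expr2 real_normK ?num_real //.
  by apply: normr_Rintegral_le => //; [rewrite mulr_ge0 ?sqr_ge0 | move=> x; exact: rem_le].
apply/cvgrPdist_le => eps eps0; near=> h.
have h0 : h != 0 by near: h; exact: nbhs_dnbhs_neq.
have : `|h| < Num.min 1 (eps / (C + 1)).
  by near: h; apply: dnbhs0_lt; rewrite lt_min ltr01 divr_gt0 // ltr_wpDl.
rewrite lt_min => /andP[h1 hC]; rewrite distrC; apply: le_trans (key h h0 (ltW h1)) _.
rewrite ltr_pdivlMr ?ltr_wpDl // in hC.
by apply: le_trans (ltW hC); rewrite ler_wpM2l // lerDl.
Unshelve. all: by end_near.
Qed.

Lemma exp_tilt_moment_gt0 (phi : T -> T) (c : R) : measurable_fun setT phi ->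
  (forall E, measurable E -> mu (phi @^-1` E) = mu E) -> phi @^-1` S = S ->
  (forall x, y (phi x) = - y x) -> (forall x, P (phi x) = P x - c * y x) ->
  0 < c -> ~ (\forall x \ae mu, S x -> y x = 0) ->
  0 < \int[mu]_(x in S) (y x * expR (P x)).
Proof.
move=> mphi phiP phiS yphi Pphi c0 ny0.
pose g x := y x * expR (P x).
pose k x := y x * (expR (P x) - expR (P x - c * y x)).
have kE x : k x = g x + g (phi x) by rewrite /k /g yphi Pphi; ring.
have k0 x : 0 <= k x.
  rewrite /k; have [->|/(mul_expR_gap_gt0 (P x) _ _ c0)/ltW//] := eqVneq (y x) 0.
  by rewrite mul0r.
have gphi_int : mu.-integrable S (EFin \o (g \o phi)).
  apply: (bounded_integrable mu _ _ (A * expR B) mS) => [|x Sx].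
    by apply: measurableT_comp.
  by rewrite -phiS in Sx; exact: moment_le.
have k_int : mu.-integrable S (EFin \o k).
  apply: (eq_integrable mS _ _ _ (integrableD mS integrable_moment gphi_int)) => x _.
  by rewrite /= kE.
have cst0_int : mu.-integrable S (EFin \o cst (0 : R)).
  by apply: (bounded_integrable mu _ _ 0 mS (measurable_cst _)) => x _; rewrite normr0.
have : \int[mu]_(x in S) cst 0 x < \int[mu]_(x in S) k x.
  apply: lt_Rintegral => // nk0; apply: ny0.
  have aeF := ae_filter_ringOfSetsType mu.
  apply: filterS nk0 => x k0x Sx; have [//|y0] := eqVneq (y x) 0.
  by have /esym/eqP := k0x Sx; rewrite gt_eqF // mul_expR_gap_gt0.
rewrite Rintegral_cst // mul0r (eq_Rintegral _ (fun x _ => kE x)) RintegralD //.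
by rewrite (Rintegral_comp_preserving mu phi mphi phiP _ _ mS phiS mmoment gphi_int); lra.
Qed.

Lemma exp_tilt_moment_lt : (forall x, S x -> y x <= 1) ->
  ~ (\forall x \ae mu, S x -> y x = 1) ->
  \int[mu]_(x in S) (y x * expR (P x)) < \int[mu]_(x in S) expR (P x).
Proof.
move=> y1 ny1; apply: lt_Rintegral => // [x Sx|yeP].
  by rewrite -[leRHS]mul1r ler_wpM2r ?expR_ge0 ?y1.
have aeF := ae_filter_ringOfSetsType mu.
apply: ny1; apply: filterS yeP => x + Sx => /(_ Sx) yePx.
by apply: (mulIf (negbT (gt_eqF (expR_gt0 (P x))))); rewrite mul1r.
Qed.

End exp_tilt.

Section open_sigma_algebra.
Context {T : ptopologicalType}.
Local Notation borel T := (g_sigma_algebraType (@open T)).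

Lemma closed_measurable_open (A : set T) : closed A -> measurable (A : set (borel T)).
Proof.
rewrite -openC => oCA; rewrite -[A]setCK; apply: measurableC.
exact: sub_sigma_algebra.
Qed.

Lemma continuous_measurable_open {U : ptopologicalType} (f : T -> U) :
  continuous f -> measurable_fun setT (f : borel T -> borel U).
Proof.
move=> /continuousP cf.
apply: (@measurability _ _ (borel T) (borel U) setT f (@open U)) => // _ [B oB <-].
by rewrite setTI; apply: sub_sigma_algebra; exact: cf.
Qed.

Lemma continuous_measurable_openR {R : realType} (f : T -> R) :
  continuous f -> measurable_fun setT (f : borel T -> R).
Proof.
move=> /continuousP cf; apply: (measurability _ (RGenOpens.measurableE R)).
move=> _ [_ [a [b ->] <-]]; rewrite setTI.
by apply: sub_sigma_algebra; exact/cf/interval_open.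
Qed.

End open_sigma_algebra.

Section matrix_continuity.
Context {R : realType} {T : topologicalType}.

Lemma continuous_mx {m n : nat} (f : T -> 'M[R]_(m, n)) :
  (forall a b, continuous (fun x => f x a b)) -> continuous f.
Proof.
move=> cf x A [P hP sPA].
have : \forall y \near x, forall ab : 'I_m * 'I_n, P ab.1 ab.2 (f y ab.1 ab.2).
  by apply: filter_forall => -[a b]; exact: cf a b x (P a b) (hP a b).
by apply: filterS => y Py; apply: sPA => a b; exact: (Py (a, b)).
Qed.

Lemma continuous_mulmx {m k n : nat} (F : T -> 'M[R]_(m, k)) (G : T -> 'M[R]_(k, n)) :
  continuous F -> continuous G -> continuous (fun x => F x *m G x).
Proof.
move=> cF cG; apply: continuous_mx => a b; under eq_fun do rewrite mxE.
apply: continuous_big => [|c _]; first exact: add_continuous.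
move=> x; apply: cvgM.
  exact: (continuous_comp (cF x) (@coord_continuous _ _ _ a c (F x))).
exact: (continuous_comp (cG x) (@coord_continuous _ _ _ c b (G x))).
Qed.

End matrix_continuity.

Section stiefel.
Context {R : realType} {n p : nat}.
Local Notation V := (@stiefel R n p).

Lemma stiefel_col_norm X c : V X -> \sum_(k < n) X k c ^+ 2 = 1.
Proof.
move=> /(congr1 (fun M : 'M[R]_p => M c c)); rewrite !mxE eqxx => VX.
by apply: etrans VX; apply: eq_bigr => k _; rewrite mxE expr2.
Qed.

Lemma stiefel_entry_le1 X k c : V X -> `|X k c| <= 1.
Proof.
move=> /(stiefel_col_norm X c); rewrite (bigD1 k) //= => X1.
have : 0 <= \sum_(j < n | j != k) X j c ^+ 2 by apply: sumr_ge0 => *; exact: sqr_ge0.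
move: X1; set s := \sum_(_ < _ | _) _ => X1 s0.
rewrite ler_norml; apply/andP; split; nra.
Qed.

Lemma measurable_stiefel : measurable V.
Proof.
have /continuous_closedP /(_ [set 1%:M]) : continuous (fun X : 'M[R]_(n, p) => X^T *m X).
  apply: continuous_mulmx; apply: continuous_mx => a b /=;
    [under eq_fun do rewrite mxE|]; exact: coord_continuous.
move=> /(_ (compact_closed (@norm_hausdorff _ _) (finite_compact (finite_set1 _)))).
exact: closed_measurable_open.
Qed.

Lemma measurable_coord a b : measurable_fun setT (fun X : mxBorel R n p => X a b).
Proof. exact: continuous_measurable_openR (@coord_continuous R n p a b). Qed.

Lemma measurable_mulmx_l (Q : 'M[R]_n) :
  measurable_fun setT ((fun X => Q *m X) : mxBorel R n p -> mxBorel R n p).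
Proof.
apply: continuous_measurable_open.
by apply: continuous_mulmx => [X|X]; [exact: cst_continuous|exact: cvg_id].
Qed.

Lemma stiefel_mulmx_l (Q : 'M[R]_n) : orthogonal_mx Q ->
  (fun X : mxBorel R n p => Q *m X) @^-1` V = V.
Proof.
move=> QQ; apply/funext => X.
by rewrite /preimage /stiefel /= trmx_mul -mulmxA (mulmxA Q^T) QQ mul1mx.
Qed.

End stiefel.

Section orthogonal_matrices.
Context {R : realType} {n : nat}.

Definition reflect_mx (a : 'I_n) : 'M[R]_n :=
  diag_mx (\row_k (if k == a then -1 else 1)).

Lemma reflect_mxE {p : nat} (a : 'I_n) (X : 'M[R]_(n, p)) k c :
  (reflect_mx a *m X) k c = (if k == a then - X k c else X k c).
Proof. by rewrite mul_diag_mx !mxE; case: ifP; rewrite ?mulN1r ?mul1r. Qed.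

Lemma orthogonal_reflect_mx (a : 'I_n) : orthogonal_mx (reflect_mx a).
Proof.
rewrite /orthogonal_mx tr_diag_mx mul_diag_mx; apply/matrixP => k l; rewrite !mxE.
by case: (k == l); case: (k == a); rewrite /= ?mulr1n ?mulr0n ?mulr0 ?mulN1r ?opprK ?mul1r.
Qed.

Lemma perm_mxE {p : nat} (s : 'S_n) (X : 'M[R]_(n, p)) k c :
  (perm_mx s *m X) k c = X (s k) c.
Proof. by rewrite -row_permE mxE. Qed.

Lemma orthogonal_perm_mx (s : 'S_n) : orthogonal_mx (perm_mx s : 'M[R]_n).
Proof. by rewrite /orthogonal_mx tr_perm_mx -perm_mxM mulVg perm_mx1. Qed.

End orthogonal_matrices.

Section diag_pairing.
Context {R : realType} {n p : nat}.
Implicit Types (d v : 'rV[R]_p) (X : 'M[R]_(n, p)).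

Lemma measurable_diag_pairing d :
  measurable_fun setT (fun X : mxBorel R n p => diag_pairing d X).
Proof.
apply: measurable_sum => a; under eq_fun do rewrite big_mkcond /=.
apply: measurable_sum => j; case: (_ == _); last exact: measurable_cst.
exact: measurable_funM (measurable_cst _) (measurable_coord _ _).
Qed.

Hypothesis pn : (p <= n)%N.

Lemma diag_pairingE d X :
  diag_pairing d X = \sum_(j < p) d 0 j * X (widen_ord pn j) j.
Proof.
rewrite /diag_pairing (eq_bigr (fun a : 'I_n => \sum_(j < p)
   (if (a : nat) == j then d 0 j * X a j else 0))); last by move=> a _; rewrite big_mkcond.
rewrite exchange_big /=; apply: eq_bigr => j _.
rewrite (bigD1 (widen_ord pn j)) //= eqxx big1 ?addr0 // => a aj.
by case: eqP => // aj'; case/negP: aj; apply/eqP/val_inj.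
Qed.

Lemma diag_pairingDZ h v d X :
  diag_pairing (h *: v + d) X = h * diag_pairing v X + diag_pairing d X.
Proof.
rewrite !diag_pairingE mulr_sumr -big_split; apply: eq_bigr => j _.
by rewrite !mxE mulrDl mulrA.
Qed.

Lemma diag_pairing_e i X : diag_pairing (@e_ R p i) X = X (widen_ord pn i) i.
Proof.
rewrite diag_pairingE (bigD1 i) //= big1 ?addr0 => [|j ji]; rewrite /e_ mxE eqxx.
  by rewrite eqxx mul1r.
by rewrite (negbTE ji) mul0r.
Qed.

Lemma diag_pairing_le d X : stiefel X -> diag_pairing d X <= \sum_(j < p) `|d 0 j|.
Proof.
move=> VX; rewrite diag_pairingE; apply: ler_sum => j _.
apply: le_trans (ler_norm _) _; rewrite normrM -[leRHS]mulr1 ler_wpM2l //.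
exact: stiefel_entry_le1.
Qed.

Lemma diag_pairing_reflect d i X :
  diag_pairing d (reflect_mx (widen_ord pn i) *m X) =
  diag_pairing d X - 2 * d 0 i * X (widen_ord pn i) i.
Proof.
rewrite !diag_pairingE (bigD1 i) //= [in RHS](bigD1 i) //= reflect_mxE eqxx.
rewrite (eq_bigr (fun j => d 0 j * X (widen_ord pn j) j)); first by ring.
move=> j ji; rewrite reflect_mxE; case: eqP => // /(congr1 val) /= /val_inj ji'.
by rewrite ji' eqxx in ji.
Qed.

End diag_pairing.

Section haar_stiefel.
Context {R : realType} {n p : nat} (mu : probability (mxBorel R n p) R).
Hypothesis hmu : is_haar_stiefel mu.
Local Notation V := (@stiefel R n p).

Let haar_ae_mulmx_l (Q : 'M[R]_n) (Pr : mxBorel R n p -> Prop) : orthogonal_mx Q ->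
  (\forall X \ae mu, Pr X) -> \forall X \ae mu, Pr (Q *m X).
Proof. by move=> QQ; apply: (ae_comp_preserving _ _ (measurable_mulmx_l Q) (hmu.2 Q QQ)). Qed.

Let haar_ae_stiefel_mulmx_l (Q : 'M[R]_n) (Pr : mxBorel R n p -> Prop) :
  orthogonal_mx Q -> (\forall X \ae mu, V X -> Pr X) ->
  \forall X \ae mu, V X -> Pr (Q *m X).
Proof.
have aeF := ae_filter_ringOfSetsType mu.
move=> QQ /(haar_ae_mulmx_l _ _ QQ); apply: filterS => X PrQX VX; apply: PrQX.
by rewrite -(stiefel_mulmx_l _ QQ) in VX.
Qed.

Let haar_ae_exists (Pr : mxBorel R n p -> Prop) :
  (\forall X \ae mu, V X -> Pr X) -> exists2 X, V X & Pr X.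
Proof.
apply: (ae_exists mu _ _ measurable_stiefel).
by case: hmu => muV _; change (mu V != 0%E); rewrite muV.
Qed.

Lemma haar_not_ae_entry_eq0 a b : ~ (\forall X \ae mu, V X -> X a b = 0).
Proof.
have aeF := ae_filter_ringOfSetsType mu.
move=> ab0; have col0 : \forall X \ae mu, forall k, V X -> X k b = 0.
  apply: filter_forall => k.
  have := haar_ae_stiefel_mulmx_l _ _ (orthogonal_perm_mx (tperm k a)) ab0.
  by apply: filterS => X + VX => /(_ VX); rewrite perm_mxE tpermR.
have /(haar_ae_exists _) [X VX Xb0] : \forall X \ae mu, V X -> forall k, X k b = 0.
  by apply: filterS col0 => X Xb0 VX k; exact: Xb0.
have := stiefel_col_norm X b VX.
by rewrite big1 => [/esym/eqP|k _]; rewrite ?oner_eq0 // Xb0 // expr0n.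
Qed.

Lemma haar_not_ae_entry_eq1 a b : ~ (\forall X \ae mu, V X -> X a b = 1).
Proof.
have aeF := ae_filter_ringOfSetsType mu.
move=> ab1; have ab1' := haar_ae_stiefel_mulmx_l _ _ (orthogonal_reflect_mx a) ab1.
have /(haar_ae_exists _) [X VX [Xab1]] :
    \forall X \ae mu, V X -> X a b = 1 /\ (reflect_mx a *m X) a b = 1.
  by apply: filterS2 ab1 ab1' => X h1 h2 VX; split; [exact: h1|exact: h2].
by rewrite reflect_mxE eqxx Xab1 => h; lra.
Qed.

Lemma hyp0F1E v : hyp0F1 mu v = \int[mu]_(X in V) expR (diag_pairing v X).
Proof.
case: hmu => muV _; apply: (Rintegral_full_measure mu _ _ measurable_stiefel) => //.
by apply: measurableT_comp; [exact: measurable_expR|exact: measurable_diag_pairing].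
Qed.

Hypothesis pn : (p <= n)%N.
Variables (d : 'rV[R]_p) (i : 'I_p).
Local Notation i' := (widen_ord pn i).
Let B := \sum_(j < p) `|d 0 j|.
Let y (X : mxBorel R n p) := X i' i.
Let P (X : mxBorel R n p) := diag_pairing d X.
Let my : measurable_fun setT y := measurable_coord i' i.
Let mP : measurable_fun setT P := measurable_diag_pairing d.
Let y_le1 X : V X -> `|y X| <= 1 := stiefel_entry_le1 X i' i.
Let P_le X : V X -> P X <= B := diag_pairing_le pn d X.

Lemma hyp0F1_quotient_cvg :
  (fun h : R => h^-1 *: ((hyp0F1 mu \o shift d) (h *: @e_ R p i) - hyp0F1 mu d))
    @ 0^' --> \int[mu]_(X in V) (X i' i * expR (diag_pairing d X)).
Proof.
have -> : (fun h : R => h^-1 *: ((hyp0F1 mu \o shift d) (h *: @e_ R p i) - hyp0F1 mu d)) =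
    (fun h => h^-1 * (\int[mu]_(X in V) expR (h * y X + P X) - \int[mu]_(X in V) expR (P X))).
  apply/funext => h /=; rewrite !hyp0F1E; congr (_ * (_ - _)).
  by apply: eq_Rintegral => X _; rewrite (diag_pairingDZ pn) (diag_pairing_e pn).
exact: (exp_tilt_quotient_cvg mu V y P 1 B measurable_stiefel my mP y_le1 P_le).
Qed.

Lemma hyp0F1_moment_gt0 : 0 < d 0 i ->
  0 < \int[mu]_(X in V) (X i' i * expR (diag_pairing d X)).
Proof.
move=> di0; have QQ := orthogonal_reflect_mx (R := R) i'.
apply: (exp_tilt_moment_gt0 mu V y P 1 B measurable_stiefel my mP y_le1 P_le
  _ (2 * d 0 i) (measurable_mulmx_l _) (hmu.2 _ QQ) (stiefel_mulmx_l _ QQ)) => [X|X||].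
- by rewrite /y reflect_mxE eqxx.
- by rewrite /P diag_pairing_reflect.
- by rewrite mulr_gt0.
- exact: haar_not_ae_entry_eq0.
Qed.

Lemma hyp0F1_moment_lt :
  \int[mu]_(X in V) (X i' i * expR (diag_pairing d X)) < hyp0F1 mu d.
Proof.
rewrite hyp0F1E.
apply: (exp_tilt_moment_lt mu V y P 1 B measurable_stiefel my mP y_le1 P_le).
  by move=> X VX; apply: le_trans (ler_norm _) (y_le1 X VX).
exact: haar_not_ae_entry_eq1.
Qed.

End haar_stiefel.

Theorem lemma5 (R : realType) (n p : nat) (hp : (2 <= p)%N) (hnp : (p <= n)%N)
  (mu : probability (mxBorel R n p) R) (hmu : is_haar_stiefel mu)
  (d : 'rV[R]_p) (hd : in_Sp d) (i : 'I_p) :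
  derivable (hyp0F1 mu) d (@e_ R p i) /\
  0 < 'D_(@e_ R p i) (hyp0F1 mu) d /\
  'D_(@e_ R p i) (hyp0F1 mu) d < hyp0F1 mu d.
Proof.
have cvgq := hyp0F1_quotient_cvg mu hmu hnp d i.
split; first exact: cvgP cvgq.
rewrite [X in 0 < X /\ X < _](cvg_lim _ cvgq) //.
split; last exact: hyp0F1_moment_lt.
exact: hyp0F1_moment_gt0 (hd.1 i).
Qed.
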